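(* Every most compact MP-tree on $S$ has at most $n-2$ unlabelled nodes.
   Context: Fix integers $n\ge 2$ and $m\ge 1$, and finite nonempty sets $\Sigma_1,\dots,\Sigma_m$ (the states of characters $1,\dots,m$). A set of species $S=\{S_1,\dots,S_n\}$ is given, each species $S_j$ being an $m$-tuple $(s_{j,1},\dots,s_{j,m})\in\Sigma_1\times\cdots\times\Sigma_m$. A tree on $S$ is a finite unrooted tree (connected acyclic undirected graph) $T$ together with an injective map assigning each species $S_j$ to a node of $T$. Nodes receiving a species are called labelled, the others unlabelled. A fit of $T$ is a map $f$ assigning to every node $v$ a tuple $f(v)\in\Sigma_1\times\cdots\times\Sigma_m$ such that $f(v)=S_j$ whenever $v$ is labelled with $S_j$. The cost of $f$ is $\sum_{\{u,v\}\in E(T)} h(f(u),f(v))$, where $h$ is the Hamming distance. The MP-cost $\mathrm{MP}(T)$ is the minimum cost over all fits of $T$. An MP-tree on $S$ is a tree on $S$ whose MP-cost equals the minimum of $\mathrm{MP}(T)$ over all trees $T$ on $S$. A most compact MP-tree on $S$ is an MP-tree on $S$ having the minimum number of nodes among all MP-trees on $S$. *)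

From mathcomp Require Import all_boot.
Unset Printing Implicit Defensive.

Section MP.
(* m characters; character i has finite state set Sigma i. *)
Variable m : nat.
Variable Sigma : 'I_m -> finType.

Definition state := {dffun forall i : 'I_m, Sigma i}.

Definition hamming (x y : state) : nat := #|[pred i : 'I_m | x i != y i]|.

Variable n : nat.
Variable S : 'I_n -> state.

Record tree := Tree { nv : nat; adj : rel 'I_nv; lab : 'I_n -> 'I_nv }.

Definition is_tree (T : tree) : Prop :=
  [/\ symmetric (adj T), irreflexive (adj T),
      (forall x y : 'I_(nv T), connect (adj T) x y),
      (forall c : seq 'I_(nv T), uniq c -> 2 < size c -> ~~ cycle (adj T) c)
    & injective (lab T)].

Definition is_fit (T : tree) (f : 'I_(nv T) -> state) : Prop :=
  forall j : 'I_n, f (lab T j) = S j.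

(* each undirected edge {u,v} counted once, via u < v *)
Definition cost (T : tree) (f : 'I_(nv T) -> state) : nat :=
  \sum_(u : 'I_(nv T)) \sum_(v : 'I_(nv T) | (u < v) && adj T u v)
     hamming (f u) (f v).

Definition MP_cost (T : tree) (c : nat) : Prop :=
  (exists f, is_fit T f /\ cost T f = c) /\
  (forall f, is_fit T f -> c <= cost T f).

Definition MP_tree (T : tree) : Prop :=
  is_tree T /\
  exists c, MP_cost T c /\
    (forall (T' : tree) (c' : nat), is_tree T' -> MP_cost T' c' -> c <= c').

Definition most_compact_MP_tree (T : tree) : Prop :=
  MP_tree T /\ (forall T' : tree, MP_tree T' -> nv T <= nv T').

Definition unlabelled_count (T : tree) : nat :=
  #|[pred v : 'I_(nv T) | [forall j : 'I_n, lab T j != v]]|.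

End MP.

From mathcomp Require Import all_boot zify.
From Stdlib Require Import Classical.
Set Implicit Arguments. Unset Strict Implicit.
Unset Printing Implicit Defensive.

(* Fix an optimal fit f of the most compact MP-tree T and weigh a pair of nodes
   by the Hamming distance of their f-states, a metric.  Among the connected
   graphs on nodes of T that contain every labelled node and are no heavier than
   T, take one with fewest vertices, then fewest edges.  It is a tree in which
   no unlabelled vertex has degree one (delete it) or two (replace its two edges
   by one, no heavier by the triangle inequality).  Relabelled, it is again an
   MP-tree, so it has at least as many nodes N as T; and since its n labelled
   vertices have degree >= 1 and the others degree >= 3, the degree sum
   2 (N - 1) forces N <= 2 n - 2. *)

Lemma exists_minimal_nat (P : nat -> Prop) k :
  P k -> exists2 m, P m & forall j, P j -> m <= j.
Proof.
move=> Pk; apply: NNPP => nomin; elim/ltn_ind: k Pk => k IH Pk.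
apply: nomin; exists k => // j Pj; rewrite leqNgt; apply/negP => jk.
exact: IH jk Pj.
Qed.

Section Graphs.
Variable V : finType.
Implicit Types (e : rel V) (A : {set V}) (x y v a b : V).

Definition nbhd e x : {set V} := [set y | e x y].
Definition supported e A := forall x y, e x y -> x \in A.
Definition connected_on e A := {in A &, forall x y, connect e x y}.
Definition acyclic e := forall c, uniq c -> 2 < size c -> ~~ cycle e c.

Definition delv e v : rel V := [rel x y | [&& x != v, y != v & e x y]].
Definition arc a b : rel V := [rel x y | (x == a) && (y == b)].
Definition link a b : rel V := [rel x y | arc a b x y || arc b a x y].
Definition smooth e v a b : rel V := [rel x y | delv e v x y || link a b x y].
Definition cut_edge e a b : rel V := [rel x y | e x y && ~~ link a b x y].

Lemma in_nbhd e x y : (y \in nbhd e x) = e x y.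
Proof. by rewrite inE. Qed.

Lemma nbhd1P e v w : nbhd e v = [set w] -> forall y, e v y = (y == w).
Proof. by move=> Nv y; rewrite -in_nbhd Nv inE. Qed.

Lemma nbhd2P e v a b : nbhd e v = [set a; b] -> forall y, e v y = (y == a) || (y == b).
Proof. by move=> Nv y; rewrite -in_nbhd Nv !inE. Qed.

Lemma supported_sym e A : symmetric e -> supported e A -> forall x y, e x y -> y \in A.
Proof. by move=> sy sup x y; rewrite sy => /sup. Qed.

Lemma delv_sym e v : symmetric e -> symmetric (delv e v).
Proof. by move=> sy x y; rewrite /delv /= sy; case: (x != v) (y != v) => -[]. Qed.

Lemma delv_irr e v : irreflexive e -> irreflexive (delv e v).
Proof. by move=> ir x; rewrite /delv /= ir !andbF. Qed.

Lemma delv_supported e A v : supported e A -> supported (delv e v) (A :\ v).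
Proof. by move=> sup x y /and3P[xv _ /sup xA]; rewrite !inE xv. Qed.

Lemma link_sym a b : symmetric (link a b).
Proof. by move=> x y; rewrite /link /arc /= orbC andbC [(y == b) && _]andbC. Qed.

Lemma link_irr a b : a != b -> irreflexive (link a b).
Proof.
move=> ab x; rewrite /link /arc /=; apply/negP => /orP[] /andP[/eqP-> /eqP xb].
all: by rewrite xb eqxx in ab.
Qed.

Lemma connect_hom (W : finType) (r : rel V) (r' : rel W) (phi : V -> W) :
  (forall x y, r x y -> connect r' (phi x) (phi y)) ->
  forall x y, connect r x y -> connect r' (phi x) (phi y).
Proof.
move=> H x y /connectP[p]; elim: p x => [|z p IH] x /=; first by move=> _ ->.
by case/andP=> rxz pz ly; exact: connect_trans (H _ _ rxz) (IH _ pz ly).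
Qed.

(* Collapsing [v] onto its neighbour [a] maps every edge of [e] to a walk of [e']. *)
Lemma connected_on_collapse e e' A v a : symmetric e -> irreflexive e ->
  symmetric e' -> connected_on e A -> e v a ->
  (forall x y, x != v -> y != v -> e x y -> e' x y) ->
  (forall y, e v y -> connect e' a y) ->
  connected_on e' (A :\ v).
Proof.
move=> sy ir sy' co eva keep star x y; rewrite !inE => /andP[xv xA] /andP[yv yA].
pose phi z := if z == v then a else z.
have := connect_hom (r' := e') (phi := phi) _ (co _ _ xA yA).
rewrite /phi (negbTE xv) (negbTE yv); apply=> z t ezt; rewrite /phi.
have tv : z == v -> t != v by move=> /eqP zv; apply: contraTneq ezt => ->; rewrite zv ir.
case: (z =P v) => [zv|/eqP zv]; first by rewrite (negbTE (tv _)) ?zv //; apply: star; rewrite -zv.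
case: (t =P v) => [tv'|/eqP tv']; last exact/connect1/keep.
by rewrite (sym_connect_sym sy'); apply: star; rewrite sy -tv'.
Qed.

Lemma connected_on_delv_leaf e A v w : symmetric e -> irreflexive e ->
  connected_on e A -> nbhd e v = [set w] -> connected_on (delv e v) (A :\ v).
Proof.
move=> sy ir co /nbhd1P Nv.
apply: (connected_on_collapse (a := w) sy ir (delv_sym _ sy) co) => [|x y xv yv exy|y].
- by rewrite Nv.
- by rewrite /delv /= xv yv.
- by rewrite Nv => /eqP->.
Qed.

Lemma smooth_sym e v a b : symmetric e -> symmetric (smooth e v a b).
Proof. by move=> sy x y; rewrite /smooth /= delv_sym // link_sym. Qed.

Lemma smooth_irr e v a b : irreflexive e -> a != b -> irreflexive (smooth e v a b).
Proof. by move=> ir ab x; rewrite /smooth /= delv_irr // link_irr. Qed.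

Lemma smooth_supported e A v a b : symmetric e -> irreflexive e -> supported e A ->
  nbhd e v = [set a; b] -> supported (smooth e v a b) (A :\ v).
Proof.
move=> sy ir sup /nbhd2P Nv x y /orP[/(delv_supported sup)//|].
have inA z : (z == a) || (z == b) -> z \in A :\ v.
  rewrite -Nv => evz; rewrite !inE (supported_sym sy sup evz) andbT.
  by apply: contraTneq evz => ->; rewrite ir.
by rewrite /link /arc /= => /orP[] /andP[xab _]; apply: inA; rewrite xab ?orbT.
Qed.

Lemma connected_on_smooth e A v a b : symmetric e -> irreflexive e ->
  connected_on e A -> nbhd e v = [set a; b] -> connected_on (smooth e v a b) (A :\ v).
Proof.
move=> sy ir co /nbhd2P Nv.
apply: (connected_on_collapse (a := a) sy ir (smooth_sym _ _ _ sy) co) => [|x y xv yv exy|y].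
- by rewrite Nv eqxx.
- by rewrite /smooth /delv /= xv yv exy.
- rewrite Nv => /orP[] /eqP->; first exact: connect0.
  by apply: connect1; rewrite /smooth /link /arc /= !eqxx orbT.
Qed.

Lemma cut_edge_sym e a b : symmetric e -> symmetric (cut_edge e a b).
Proof. by move=> sy x y; rewrite /cut_edge /= sy link_sym. Qed.

(* Removing an edge of a cycle keeps its endpoints joined along the rest of the cycle. *)
Lemma connected_on_cut_cycle e A a b c s : symmetric e ->
  uniq [:: a, b, c & s] -> cycle e [:: a, b, c & s] ->
  connected_on e A -> connected_on (cut_edge e a b) A.
Proof.
move=> sy u cy co x y xA yA.
have [ab [bcs acs]] : a != b /\ b \notin c :: s /\ a \notin c :: s.
  by move: u; rewrite /= !inE negb_or => /andP[/andP[-> ->] /andP[-> _]].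
have cut_path z t : all [pred w | (w != a) && (w != b)] t -> path e z t ->
    path (cut_edge e a b) z t.
  elim: t z => [|w t IH] z //= /andP[/andP[wa wb] al] /andP[ezw pw].
  by rewrite IH // /cut_edge /link /arc /= ezw (negbTE wa) (negbTE wb) !andbF.
have ba : connect (cut_edge e a b) b a.
  move: cy; rewrite /= rcons_path => /and4P[_ ebc pcs ela].
  apply/connectP; exists (rcons (c :: s) a); last by rewrite last_rcons.
  have all_cs : all [pred w | (w != a) && (w != b)] (c :: s).
    by apply/allP=> w ws /=; apply/andP; split; apply: contraTneq ws => ->.
  rewrite rcons_path cut_path //=; last by rewrite ebc.
  rewrite /cut_edge /link /arc /= ela.
  have lcs : last c s != b by apply: contraTneq (mem_last c s) => ->.
  by rewrite (negbTE lcs) (negbTE ab) !andbF.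
apply: connect_sub (co _ _ xA yA) => p q epq.
case cpq: (cut_edge e a b p q); first exact: connect1.
move: cpq; rewrite /cut_edge /link /arc /= epq /= => /negbFE/orP[] /andP[/eqP-> /eqP->] //.
by rewrite (sym_connect_sym (cut_edge_sym _ _ sy)).
Qed.

Lemma last_path_supported e A x p : symmetric e -> supported e A ->
  x \in A -> path e x p -> last x p \in A.
Proof.
move=> sy sup xA; case/lastP: p => [|q z] //.
by rewrite rcons_path last_rcons => /andP[_ /(supported_sym sy sup)].
Qed.

Lemma path_end_neighbour e s z y : acyclic e -> uniq (rcons s z) ->
  sorted e (rcons s z) -> y \in s -> e z y -> exists s1, s = rcons s1 y.
Proof.
move=> ac + + ys ezy; case/splitPr: ys => p1 [|w p2] u so.
  by exists p1; rewrite cats1.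
have {}u : uniq [:: y, w & rcons p2 z].
  by move: u; rewrite rcons_cat cat_uniq => /and3P[].
have {}so : path e y (w :: rcons p2 z).
  move: so; rewrite rcons_cat; case: p1 {u} => [|t p1] //=.
  by rewrite cat_path => /andP[_] /= /andP[_ ->].
case/negP: (ac _ u (ltac:(by rewrite /= size_rcons))).
by move: so; rewrite /= !rcons_path last_rcons ezy andbT.
Qed.

Lemma path_end_deg e x p : irreflexive e -> acyclic e -> uniq (x :: p) ->
  path e x p -> {subset nbhd e (last x p) <= x :: p} -> #|nbhd e (last x p)| <= 1.
Proof.
move=> ir ac u pp Nsub; rewrite leqNgt; apply/negP=> /card_gt1P[y1 [y2 [N1 N2 y12]]].
have so : sorted e (x :: p) by [].
rewrite lastI in u so Nsub.
move: (last x p) (belast x p) N1 N2 Nsub so u => z s N1 N2 Nsub so u.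
have in_s y : e z y -> y \in s.
  rewrite -in_nbhd => Ny; move: (Nsub _ Ny); rewrite mem_rcons inE => /orP[/eqP yz|//].
  by move: Ny; rewrite yz in_nbhd ir.
rewrite !in_nbhd in N1 N2.
have [s1 E1] := path_end_neighbour ac u so (in_s _ N1) N1.
have [s2 E2] := path_end_neighbour ac u so (in_s _ N2) N2.
by case: (rcons_inj (etrans (esym E1) E2)) => _ E; rewrite E eqxx in y12.
Qed.

(* The end of a longest simple path starting in [A] is a vertex of degree at most one. *)
Lemma exists_leaf e A x : symmetric e -> irreflexive e -> acyclic e ->
  supported e A -> x \in A -> exists2 v, v \in A & #|nbhd e v| <= 1.
Proof.
move=> sy ir ac sup xA.
pose P k := exists p, [/\ uniq (x :: p), path e x p & #|V| - size p = k].
have [k [p [u pp <-]] kmin] : exists2 k, P k & forall j, P j -> k <= j.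
  by apply: (exists_minimal_nat (k := #|V| - 0)); exists [::].
exists (last x p); first exact: last_path_supported pp.
apply: path_end_deg => // y Ny; apply: contraT => yp.
have u' : uniq (x :: rcons p y) by rewrite -rcons_cons rcons_uniq yp.
have : #|V| - size p <= #|V| - size (rcons p y).
  by apply: kmin; exists (rcons p y); rewrite rcons_path pp -in_nbhd Ny.
have /card_uniqP card_p := u; have := max_card (mem (x :: p)).
rewrite card_p size_rcons /=; lia.
Qed.

Lemma acyclic_sub e e' : subrel e' e -> acyclic e -> acyclic e'.
Proof. by move=> sub ac c u sc; apply: contra (ac c u sc); apply: sub_cycle. Qed.

Lemma card_nbhd_delv e v x : symmetric e -> x != v ->
  #|nbhd e x| = #|nbhd (delv e v) x| + e v x.
Proof.
move=> sy xv; rewrite (cardsD1 v) in_nbhd sy addnC; congr (_ + _).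
by apply: eq_card => y; rewrite !inE /delv /= xv.
Qed.

Lemma sum_adj_card_nbhd e A v : symmetric e -> irreflexive e -> supported e A ->
  \sum_(x in A :\ v) (e v x : nat) = #|nbhd e v|.
Proof.
move=> sy ir sup; rewrite -sum1_card big_mkcond [RHS]big_mkcond /=.
apply: eq_bigr => x _; rewrite in_nbhd !inE.
case evx: (e v x); last by case: ifP.
rewrite (supported_sym sy sup evx) andbT.
by case: eqP evx => // ->; rewrite ir.
Qed.

Lemma forest_deg_sum e A : symmetric e -> irreflexive e -> acyclic e ->
  supported e A -> A != set0 -> \sum_(x in A) #|nbhd e x| + 2 <= 2 * #|A|.
Proof.
move=> + + + + /set0Pn[x xA]; have [k cardA] : exists k, #|A| = k.+1.
  by exists #|A|.-1; rewrite prednK //; apply/card_gt0P; exists x.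
elim: k e A x xA cardA => [|k IH] e A x xA cardA sy ir ac sup.
  have A1 : [set x] = A by apply/eqP; rewrite eqEcard sub1set xA cards1 cardA.
  rewrite -A1 big_set1 cards1; suff -> : #|nbhd e x| = 0 by [].
  apply: eq_card0 => y; rewrite in_nbhd; apply/negbTE/negP => exy.
  by move: (supported_sym sy sup exy); rewrite -A1 inE => /eqP yx; rewrite yx ir in exy.
have [v vA deg_v] := exists_leaf sy ir ac sup xA.
have cardAv : #|A :\ v| = k.+1 by move: cardA; rewrite (cardsD1 v) vA => -[].
have [y yAv] : exists y, y \in A :\ v by apply/card_gt0P; rewrite cardAv.
have ac' : acyclic (delv e v) by apply: acyclic_sub ac => ? ? /and3P[].
have IHv := IH _ _ _ yAv cardAv (delv_sym v sy) (delv_irr v ir) ac' (delv_supported sup).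
rewrite (big_setD1 v vA) /= (cardsD1 v A) vA.
rewrite (eq_bigr (fun x => #|nbhd (delv e v) x| + e v x)); last first.
  by move=> z; rewrite !inE => /andP[zv _]; apply: card_nbhd_delv.
rewrite big_split /= sum_adj_card_nbhd //; lia.
Qed.

Lemma nbhd_gt0 e A x y : connected_on e A -> x \in A -> y \in A -> x != y ->
  0 < #|nbhd e x|.
Proof.
move=> co xA yA; have /connectP[[|z p] /= pp ->] := co _ _ xA yA; first by rewrite eqxx.
by move=> _; apply/card_gt0P; exists z; rewrite in_nbhd; case/andP: pp.
Qed.

End Graphs.

Section Weight.
Variables (V : finType) (d : V -> V -> nat).
Implicit Types (e : rel V) (x y v a b : V).

Definition weight e := \sum_x \sum_y e x y * d x y.

Lemma leq_weight_sub e e' : subrel e' e -> weight e' <= weight e.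
Proof.
move=> sub; apply: leq_sum => x _; apply: leq_sum => y _.
by case e'xy: (e' x y); rewrite ?(sub _ _ e'xy).
Qed.

Lemma leq_weightU e e1 e2 :
  subrel e [rel x y | e1 x y || e2 x y] -> weight e <= weight e1 + weight e2.
Proof.
move=> sub; rewrite -big_split; apply: leq_sum => x _; rewrite -big_split /=.
apply: leq_sum => y _; rewrite -mulnDl leq_mul2r; apply/orP; right.
by case exy: (e x y) (sub x y) => // /(_ isT) /orP[] ->; rewrite ?addn1 ?add1n.
Qed.

Lemma weight_arc a b : weight (arc a b) = d a b.
Proof.
rewrite /weight (bigD1 a) //= [X in _ + X]big1 => [|x xa]; last first.
  by apply: big1 => y _; rewrite /arc /= (negbTE xa).
rewrite addn0 (bigD1 b) //= [X in _ + X]big1 => [|y yb]; last by rewrite /arc /= (negbTE yb) andbF.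
by rewrite /arc /= !eqxx mul1n addn0.
Qed.

Lemma weight_delv e v : symmetric e -> irreflexive e ->
  weight e = weight (delv e v) + \sum_(y in nbhd e v) (d v y + d y v).
Proof.
move=> sy ir; have out F : \sum_y e v y * F y = \sum_(y in nbhd e v) F y.
  by rewrite [RHS]big_mkcond; apply: eq_bigr => y _; rewrite in_nbhd; case: (e v y); rewrite ?mul1n.
rewrite big_split /= -!out /weight (bigD1 v) //= [RHS]addnCA; congr (_ + _).
rewrite [X in _ = X + _](bigD1 v) //= [X in _ = X + _ + _]big1 ?add0n => [|y _]; last first.
  by rewrite /delv /= eqxx.
have -> : \sum_y e v y * d y v = \sum_(x | x != v) e x v * d x v.
  by rewrite (bigD1 v) //= ir add0n; apply: eq_bigr => x _; rewrite sy.
rewrite -big_split /=; apply: eq_bigr => x xv; rewrite (bigD1 v) //= addnC.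
rewrite [X in _ = X + _](bigD1 v) //= {1}/delv /= eqxx andbF add0n.
by congr (_ + _); apply: eq_bigr => y yv; rewrite /delv /= xv yv.
Qed.

Hypothesis d_triangle : forall x y z, d x z <= d x y + d y z.

Lemma weight_smooth e v a b : symmetric e -> irreflexive e ->
  nbhd e v = [set a; b] -> a != b -> weight (smooth e v a b) <= weight e.
Proof.
move=> sy ir Nv ab; rewrite (weight_delv v sy ir) Nv big_setU1 ?big_set1 ?inE //=.
apply: leq_trans (leq_weightU (e1 := delv e v) (e2 := link a b) _) _ => //.
rewrite leq_add2l; apply: leq_trans (leq_weightU (e1 := arc a b) (e2 := arc b a) _) _ => //.
rewrite !weight_arc; have := d_triangle a v b; have := d_triangle b v a; lia.
Qed.

End Weight.

Section Reduction.
Variables (V : finType) (d : V -> V -> nat) (L : {set V}).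
Hypothesis d_triangle : forall x y z, d x z <= d x y + d y z.
Implicit Types (e : rel V) (A : {set V}).

Definition steiner_graph A e :=
  [/\ symmetric e, irreflexive e, supported e A, L \subset A & connected_on e A].

Definition edge_count e := #|[pred p : V * V | e p.1 p.2]|.

(* Lexicographic: first the number of vertices, then the number of edges. *)
Definition graph_size A e := #|A| * #|{: V * V}|.+1 + edge_count e.

Lemma graph_size_delete A e e' x : x \in A -> graph_size (A :\ x) e' < graph_size A e.
Proof.
move=> xA; rewrite /graph_size (cardsD1 x A) xA add1n mulSn.
have : edge_count e' <= #|{: V * V}| by apply: max_card.
lia.
Qed.

Lemma edge_count_cut e a b : e a b -> edge_count (cut_edge e a b) < edge_count e.
Proof.
move=> eab; apply: proper_card; apply/properP; split.
  by apply/subsetP => p; rewrite !inE /cut_edge /= => /andP[].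
by exists (a, b); rewrite !inE /cut_edge /link /arc /= ?eab ?eqxx.
Qed.

Lemma steiner_cut A e a b c s : steiner_graph A e ->
  uniq [:: a, b, c & s] -> cycle e [:: a, b, c & s] -> steiner_graph A (cut_edge e a b).
Proof.
case=> sy ir sup LA co u cy; split => //.
- exact: cut_edge_sym.
- by move=> x; rewrite /cut_edge /= ir.
- by move=> x y /andP[/sup].
- exact: connected_on_cut_cycle cy co.
Qed.

Lemma steiner_delv_leaf A e x w : steiner_graph A e -> x \notin L ->
  nbhd e x = [set w] -> steiner_graph (A :\ x) (delv e x).
Proof.
case=> sy ir sup LA co xL Nx; split.
- exact: delv_sym.
- exact: delv_irr.
- exact: delv_supported.
- by apply/subsetP => y yL; rewrite !inE (subsetP LA _ yL) andbT; apply: contraNneq xL => <-.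
- exact: connected_on_delv_leaf Nx.
Qed.

Lemma steiner_smooth A e x a b : steiner_graph A e -> x \notin L ->
  nbhd e x = [set a; b] -> a != b -> steiner_graph (A :\ x) (smooth e x a b).
Proof.
case=> sy ir sup LA co xL Nx ab; split.
- exact: smooth_sym.
- exact: smooth_irr.
- exact: smooth_supported Nx.
- by apply/subsetP => y yL; rewrite !inE (subsetP LA _ yL) andbT; apply: contraNneq xL => <-.
- exact: connected_on_smooth Nx.
Qed.

(* Take a Steiner graph of minimal [graph_size] among those no heavier than [e].
   Cutting an edge of a cycle, deleting a non-terminal leaf or smoothing a
   non-terminal vertex of degree two would shrink it without increasing its
   weight (the last by the triangle inequality). *)
Lemma exists_reduced_steiner A e : steiner_graph A e -> L != set0 ->
  exists A' e', [/\ steiner_graph A' e', weight d e' <= weight d e, acyclic e' &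
    {in A' :\: L, forall x, 2 < #|nbhd e' x|}].
Proof.
move=> st0 /set0Pn[l lL].
pose P k := exists A' e',
  [/\ steiner_graph A' e', weight d e' <= weight d e & graph_size A' e' = k].
have [_ [A' [e' [st le <-]]] minimal] : exists2 k, P k & forall j, P j -> k <= j.
  by apply: exists_minimal_nat; exists A, e.
have [sy ir sup LA co] := st.
have no_smaller A'' e'' : steiner_graph A'' e'' -> weight d e'' <= weight d e' ->
    graph_size A' e' <= graph_size A'' e''.
  by move=> st'' le''; apply: minimal; exists A'', e''; split => //; apply: leq_trans le.
exists A', e'; split => //.
  move=> [|a [|b [|c s]]] // u _; apply/negP => cy.
  have cut_le : weight d (cut_edge e' a b) <= weight d e' by apply: leq_weight_sub => ? ? /andP[].
  have := no_smaller _ _ (steiner_cut st u cy) cut_le.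
  by rewrite /graph_size leq_add2l leqNgt edge_count_cut //; case/andP: cy.
move=> x; rewrite inE => /andP[xL xA]; rewrite ltnNge; apply/negP => deg_x.
have lA := subsetP LA _ lL.
have xl : x != l by apply: contraNneq xL => ->.
move: deg_x (nbhd_gt0 co xA lA xl); rewrite leq_eqVlt ltnS leq_eqVlt ltnS leqn0.
case/or3P => [/cards2P[a [b [ab Nx]]]|/cards1P[w Nx]|/eqP-> //] _.
  have := no_smaller _ _ (steiner_smooth st xL Nx ab) (weight_smooth d_triangle sy ir Nx ab).
  by rewrite leqNgt graph_size_delete.
have delv_le : weight d (delv e' x) <= weight d e' by apply: leq_weight_sub => ? ? /and3P[].
have := no_smaller _ _ (steiner_delv_leaf st xL Nx) delv_le.
by rewrite leqNgt graph_size_delete.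
Qed.

Lemma steiner_tree_card A e : steiner_graph A e -> acyclic e ->
  {in A :\: L, forall x, 2 < #|nbhd e x|} -> 1 < #|L| -> #|A| + 2 <= 2 * #|L|.
Proof.
case=> sy ir sup LA co ac deg3 /card_gt1P[l1 [l2 [l1L l2L l12]]].
have [l1A l2A] := (subsetP LA _ l1L, subsetP LA _ l2L).
have A0 : A != set0 by apply/set0Pn; exists l1.
have := forest_deg_sum sy ir ac sup A0.
rewrite (big_setID L) /= (setIidPr LA).
have deg_L : #|L| <= \sum_(x in L) #|nbhd e x|.
  rewrite -sum1_card; apply: leq_sum => x /(subsetP LA) xA.
  have [xl1|xl1] := eqVneq x l1; last exact: nbhd_gt0 co xA l1A xl1.
  by apply: nbhd_gt0 co xA l2A _; rewrite xl1.
have deg_AL : #|A :\: L| * 3 <= \sum_(x in A :\: L) #|nbhd e x|.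
  by rewrite -sum_nat_const; apply: leq_sum => x /deg3.
have := cardsID L A; rewrite (setIidPr LA); lia.
Qed.

End Reduction.

Lemma weight_enum_val (V : finType) (d : V -> V -> nat) (A : {set V}) (e : rel V) :
  symmetric e -> supported e A ->
  weight (fun i j : 'I_#|A| => d (enum_val i) (enum_val j))
         [rel i j : 'I_#|A| | e (enum_val i) (enum_val j)] = weight d e.
Proof.
move=> sy sup; have restrict (F : V -> nat) : {in [predC A], F =1 (fun=> 0)} ->
    \sum_x F x = \sum_(i < #|A|) F (enum_val i).
  move=> F0; rewrite (bigID (mem A)) /= [X in _ + X]big1 ?addn0 => [|x /F0 //].
  exact: big_enum_val.
rewrite /weight restrict => [|x xA]; last first.
  by apply: big1 => y _; case: (boolP (e x y)) => // /sup; rewrite (negbTE xA).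
apply: eq_bigr => i _; rewrite restrict // => y yA.
by case: (boolP (e _ y)) => // /(supported_sym sy sup); rewrite (negbTE yA).
Qed.

Section MaximumParsimony.
Variables (m : nat) (Sigma : 'I_m -> finType) (n : nat) (S : 'I_n -> state m Sigma).

Lemma hamming_sym x y : hamming m Sigma x y = hamming m Sigma y x.
Proof. by apply: eq_card => i; rewrite !inE eq_sym. Qed.

Lemma hamming_triangle x y z :
  hamming m Sigma x z <= hamming m Sigma x y + hamming m Sigma y z.
Proof.
rewrite /hamming -cardUI; apply: leq_trans (leq_addr _ _); apply: subset_leq_card.
by apply/subsetP => i; rewrite !inE; case: (x i =P y i) => [->|].
Qed.

(* [cost] counts each edge once, [weight] counts it in both directions. *)
Lemma cost_double (T : tree n) (g : 'I_(nv n T) -> state m Sigma) :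
  symmetric (adj n T) -> irreflexive (adj n T) ->
  2 * cost m Sigma n T g = weight (fun u v => hamming m Sigma (g u) (g v)) (adj n T).
Proof.
move=> sy ir; set F := fun u v => adj n T u v * hamming m Sigma (g u) (g v).
have F_sym u v : F u v = F v u by rewrite /F sy hamming_sym.
have half : cost m Sigma n T g = \sum_(u : 'I_(nv n T)) \sum_(v : 'I_(nv n T)) (u < v) * F u v.
  apply: eq_bigr => u _; rewrite big_mkcond; apply: eq_bigr => v _.
  by rewrite /F; case: (u < v); case: (adj n T u v); rewrite ?mul1n.
have other_half :
    \sum_(u : 'I_(nv n T)) \sum_(v : 'I_(nv n T)) (v < u) * F u v = cost m Sigma n T g.
  by rewrite half exchange_big; apply: eq_bigr => u _; apply: eq_bigr => v _; rewrite F_sym.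
rewrite mul2n -addnn {1}half -{}other_half -!big_split; apply: eq_bigr => u _.
rewrite -big_split; apply: eq_bigr => v _ /=.
case: (ltngtP u v) => [||/val_inj->]; rewrite ?mul1n ?mul0n ?addn0 //.
by rewrite /F ir.
Qed.

Section InducedTree.
Variables (V : finType) (A : {set V}) (e : rel V) (l : 'I_n -> V) (x0 : V).
Hypothesis x0A : x0 \in A.

Definition induced_tree : tree n :=
  Tree n #|A| [rel i j : 'I_#|A| | e (enum_val i) (enum_val j)] (enum_rank_in x0A \o l).

Hypothesis lA : forall j, l j \in A.

Lemma is_tree_induced : symmetric e -> irreflexive e -> supported e A ->
  connected_on e A -> acyclic e -> injective l -> is_tree n induced_tree.
Proof.
move=> sy ir sup co ac inj_l; split.
- by move=> i j; rewrite /= sy.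
- by move=> i; rewrite /= ir.
- move=> i j /=; rewrite -[i](enum_valK_in x0A) -[j](enum_valK_in x0A).
  apply: connect_hom (co _ _ (enum_valP i) (enum_valP j)) => x y exy.
  apply: connect1; rewrite /= !enum_rankK_in //; last exact: sup exy.
  exact: (supported_sym sy sup exy).
- move=> c u sc; have := ac (map enum_val c).
  rewrite map_inj_uniq ?size_map ?cycle_map; last exact: enum_val_inj.
  by move=> /(_ u sc).
- by move=> j k /(congr1 enum_val); rewrite /= !enum_rankK_in //; apply: inj_l.
Qed.

Lemma is_fit_induced (g : V -> state m Sigma) : (forall j, g (l j) = S j) ->
  is_fit m Sigma n S induced_tree (g \o enum_val).
Proof. by move=> gl j; rewrite /= enum_rankK_in. Qed.

Lemma cost_induced (g : V -> state m Sigma) : symmetric e -> irreflexive e -> supported e A ->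
  2 * cost m Sigma n induced_tree (g \o enum_val) =
  weight (fun x y => hamming m Sigma (g x) (g y)) e.
Proof.
move=> sy ir sup; rewrite cost_double; first exact: weight_enum_val.
- by move=> i j; rewrite /= sy.
- by move=> i; rewrite /= ir.
Qed.

End InducedTree.

Lemma MP_tree_of_cheap_fit (T' : tree n) (c : nat) (f : 'I_(nv n T') -> state m Sigma) :
  (forall T'' c'', is_tree n T'' -> MP_cost m Sigma n S T'' c'' -> c <= c'') ->
  is_tree n T' -> is_fit m Sigma n S T' f -> cost m Sigma n T' f <= c ->
  MP_tree m Sigma n S T'.
Proof.
move=> c_opt treeT' fit_f cost_f; split => //.
pose P k := exists g, is_fit m Sigma n S T' g /\ cost m Sigma n T' g = k.
have [c' [g [fit_g <-]] c'_min] : exists2 c', P c' & forall k, P k -> c' <= k.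
  by apply: exists_minimal_nat; exists f.
have MP_g : MP_cost m Sigma n S T' (cost m Sigma n T' g).
  by split; [exists g | move=> h fit_h; apply: c'_min; exists h].
exists (cost m Sigma n T' g); split => // T'' c'' treeT'' MP''.
apply: leq_trans (c_opt _ _ treeT'' MP''); apply: leq_trans cost_f.
by apply: c'_min; exists f.
Qed.

Lemma unlabelled_countE (T : tree n) : injective (lab n T) ->
  unlabelled_count n T = nv n T - n.
Proof.
move=> inj; set labelled := lab n T @: [set: 'I_n].
have := cardsC labelled; rewrite card_ord card_imset // cardsT card_ord.
suff -> : unlabelled_count n T = #|~: labelled| by lia.
apply: eq_card => v; rewrite !inE; apply/forallP/negP => [nl /imsetP[j _ vj]|nl j].
  by move: (nl j); rewrite vj eqxx.
by apply: contra_not_neq nl => <-; apply: imset_f.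
Qed.

End MaximumParsimony.

Theorem lemma4 (m : nat) (Sigma : 'I_m -> finType) (n : nat)
    (S : 'I_n -> state m Sigma) :
  2 <= n -> 1 <= m -> (forall i : 'I_m, 0 < #|Sigma i|) -> injective S ->
  forall T : tree n, most_compact_MP_tree m Sigma n S T ->
    unlabelled_count n T <= n - 2.
Proof.
move=> n2 _ _ _ T [[treeT [c [[[f [fit_f cost_f]] _] c_opt]]] compact].
have [sy ir co ac inj] := treeT.
pose L := lab n T @: [set: 'I_n].
have cardL : #|L| = n by rewrite card_imset // cardsT card_ord.
pose j0 := Ordinal (ltnW n2).
have steinerT : steiner_graph L [set: 'I_(nv n T)] (adj n T) by split.
have [|A [e [st_e le_w ac_e deg3]]] :=
  exists_reduced_steiner (fun x y z => @hamming_triangle m Sigma (f x) (f y) (f z)) steinerT.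
  by apply/set0Pn; exists (lab n T j0); apply: imset_f.
have [sy_e ir_e sup_e LA co_e] := st_e.
have lA j : lab n T j \in A by apply: (subsetP LA); apply: imset_f.
pose T' := induced_tree e (lab n T) (lA j0).
have MP_T' : MP_tree m Sigma n S T'.
  apply: (MP_tree_of_cheap_fit (T' := T') (f := f \o enum_val) c_opt).
  - exact: is_tree_induced.
  - exact: is_fit_induced.
  - by rewrite -(leq_pmul2l (isT : 0 < 2)) cost_induced // -cost_f cost_double.
have := compact _ MP_T'; have := steiner_tree_card st_e ac_e deg3.
by rewrite unlabelled_countE //= cardL; lia.
Qed.
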